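(* Let $\Gamma$ be a distance-regular graph with valency $k$ and diameter $D\geq 2$. Let $s$ be maximal such that for every vertex $x$ and all $y,z\in\Gamma(x)$ with $y\not\sim z$, there exists a co-clique of size at least $s$ in $\Delta(x)$ containing $y$ and $z$. Then (i) $s\geq \frac{k}{a_1+1}$; (ii) $c_2-1\geq \max\{\frac{s'(a_1+1)-k}{\binom{s'}{2}} : 2\leq s'\leq s\}$, and equality implies that $\Gamma$ is a Terwilliger graph.
   Context: A connected graph $\Gamma$ of diameter $D$ is distance-regular if there are integers $b_i,c_i$ ($0\le i\le D$) such that for any two vertices $x,y$ at distance $i$, exactly $c_i$ neighbours of $y$ are at distance $i-1$ from $x$ and exactly $b_i$ neighbours of $y$ are at distance $i+1$ from $x$. Then $\Gamma$ is regular of valency $k=b_0$, and $a_i:=k-b_i-c_i$. $\Gamma(x)$ denotes the set of neighbours of $x$, and the local graph $\Delta(x)$ is the subgraph induced on $\Gamma(x)$. A co-clique is a set of pairwise non-adjacent vertices. A Terwilliger graph is a connected non-complete graph such that for any two vertices $u,v$ at distance two, the subgraph induced on their common neighbours is a clique of size $\mu$, for some fixed $\mu\geq 1$. *)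

From mathcomp Require Import all_boot all_order all_algebra.
Set Implicit Arguments. Unset Strict Implicit. Unset Printing Implicit Defensive.
Import Order.TTheory GRing.Theory Num.Theory.

Section Graphs.
Variable T : finType.
Variable e : rel T.

Definition simple_graph : Prop := symmetric e /\ irreflexive e.

Definition nbhd (x : T) : {set T} := [set y | e x y].

Fixpoint ball (n : nat) (x : T) : {set T} :=
  match n with
  | 0 => [set x]
  | n'.+1 => ball n' x :|: [set z | [exists y in ball n' x, e y z]]
  end.

Definition dist_is (x y : T) (i : nat) : bool :=
  (y \in ball i x) && (if i is i'.+1 then y \notin ball i' x else true).

Definition connected_graph : Prop := forall x y, exists n, y \in ball n x.

Definition has_diameter (D : nat) : Prop :=
  connected_graph /\ (forall x y, y \in ball D x) /\ exists x y, dist_is x y D.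

Definition distance_regular (D : nat) (b c : nat -> nat) : Prop :=
  simple_graph /\ has_diameter D /\
  forall i, i <= D -> forall x y, dist_is x y i ->
    #|[set z | e y z & dist_is x z i.-1]| = c i /\
    #|[set z | e y z & dist_is x z i.+1]| = b i.

Definition clique (C : {set T}) : Prop :=
  forall u v, u \in C -> v \in C -> u != v -> e u v.

Definition coclique (C : {set T}) : Prop :=
  forall u v, u \in C -> v \in C -> ~~ e u v.

Definition coclique_prop (s : nat) : Prop :=
  forall x y z, e x y -> e x z -> y != z -> ~~ e y z ->
    exists C : {set T}, [/\ C \subset nbhd x, coclique C,
                           y \in C, z \in C & s <= #|C|].

Definition complete_graph : Prop := forall u v, u != v -> e u v.

Definition terwilliger : Prop :=
  connected_graph /\ ~ complete_graph /\
  exists mu : nat, 1 <= mu /\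
    forall u v, dist_is u v 2 ->
      clique (nbhd u :&: nbhd v) /\ #|nbhd u :&: nbhd v| = mu.

End Graphs.

(* a_i := k - b_i - c_i with k = b_0 *)
Definition a_num (b c : nat -> nat) (i : nat) : nat := b 0 - b i - c i.

(* Fix a vertex x and, for a neighbour i of x, let L_x(i) be i together with its neighbours
   in the local graph Δ(x); it has a_1 + 1 elements.  For two non-adjacent neighbours i, j
   of x, L_x(i) ∩ L_x(j) consists of common neighbours of i and j other than x, so it has
   at most c_2 - 1 elements.
   (i) The sets L_x(i), for i in a maximal co-clique C of Δ(x), cover Γ(x), so
       k <= |C| (a_1 + 1); if s (a_1 + 1) < k every such C would have more than s elements.
   (ii) For a co-clique of size s' in Δ(x), the Bonferroni inequality applied to the L_x(i)
       gives s' (a_1 + 1) - C(s', 2) (c_2 - 1) <= |Γ(x)| = k.  If some μ-graph were not a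
       clique, i.e. u, v at distance 2 had non-adjacent common neighbours x, w, then taking
       the co-clique through u and v in Δ(x), the pair (u, v) loses w as well and the
       inequality becomes strict. *)
From mathcomp Require Import all_boot all_order all_algebra.
From mathcomp Require Import zify.
Import Order.TTheory GRing.Theory Num.Theory.

Set Implicit Arguments.
Unset Strict Implicit.
Unset Printing Implicit Defensive.

Section PairOverlap.
Variables (T : finType) (A : T -> {set T}).

Fixpoint pair_overlap (l : seq T) : nat :=
  if l is i :: l' then \sum_(j <- l') #|A i :&: A j| + pair_overlap l' else 0.

Lemma card_bigcup_seq_le l : #|\bigcup_(i <- l) A i| <= \sum_(i <- l) #|A i|.
Proof.
elim: l => [|i l IH]; first by rewrite !big_nil cards0.
by rewrite !big_cons (leq_trans (leq_card_setU _ _)) ?leq_add2l.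
Qed.

Lemma card_setI_bigcup_le X l :
  #|X :&: \bigcup_(j <- l) A j| <= \sum_(j <- l) #|X :&: A j|.
Proof.
elim: l => [|j l IH]; first by rewrite big_nil setI0 cards0.
by rewrite !big_cons setIUr (leq_trans (leq_card_setU _ _)) ?leq_add2l.
Qed.

Lemma bonferroni_pairs l :
  \sum_(i <- l) #|A i| <= #|\bigcup_(i <- l) A i| + pair_overlap l.
Proof.
elim: l => [|i l IH] /=; first by rewrite !big_nil.
rewrite !big_cons.
have := cardsUI (A i) (\bigcup_(j <- l) A j).
have := card_setI_bigcup_le (A i) l.
lia.
Qed.

Lemma sum_overlap_le i m l : {in l, forall j, #|A i :&: A j| <= m} ->
  \sum_(j <- l) #|A i :&: A j| <= size l * m.
Proof.
move=> le_m; rewrite -sum1_size big_distrl /= big_seq [leqRHS]big_seq.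
by apply: leq_sum => j /le_m; rewrite mul1n.
Qed.

Lemma pair_overlap_le m l : uniq l ->
  {in l &, forall i j, i != j -> #|A i :&: A j| <= m} ->
  pair_overlap l <= 'C(size l, 2) * m.
Proof.
elim: l => [|i l IH] //= /andP[il ul] le_m.
rewrite binS bin1 mulnDl [leqRHS]addnC leq_add //.
- apply: sum_overlap_le => j jl; apply: le_m; rewrite ?inE ?jl ?eqxx ?orbT //.
  by apply: contraNneq il => ->.
- by apply: IH => // j j' jl j'l; apply: le_m; rewrite inE ?jl ?j'l orbT.
Qed.

Lemma pair_overlap_lt m u v r : uniq [:: u, v & r] ->
  {in [:: u, v & r] &, forall i j, i != j -> #|A i :&: A j| <= m} ->
  #|A u :&: A v| < m ->
  pair_overlap [:: u, v & r] < 'C((size r).+2, 2) * m.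
Proof.
move=> uniq_l le_m lt_uv; have ur : u \notin r.
  by move: uniq_l => /= /andP[]; rewrite inE negb_or => /andP[].
have le_ur : \sum_(j <- r) #|A u :&: A j| <= size r * m.
  apply: sum_overlap_le => j jr; apply: le_m; rewrite ?inE ?jr ?eqxx ?orbT //.
  by apply: contraNneq ur => ->.
have le_vr : pair_overlap (v :: r) <= 'C((size r).+1, 2) * m.
  apply: (pair_overlap_le (l := v :: r)); first by case/andP: uniq_l.
  by move=> i j il jl; apply: le_m; rewrite inE ?il ?jl orbT.
rewrite /= in le_vr; rewrite /= big_cons binS bin1 mulnDl mulSn.
by rewrite [leqRHS]addnC -addSn leq_add // -addSn leq_add.
Qed.

End PairOverlap.

Section Distance.
Variables (T : finType) (e : rel T).

Lemma in_ball1 x z : (z \in ball e 1 x) = (z == x) || e x z.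
Proof.
rewrite /= !inE; congr (_ || _).
apply/existsP/idP => [[y /andP[/set1P -> //]] | xz].
by exists x; rewrite inE eqxx xz.
Qed.

Lemma dist_is0 x z : dist_is e x z 0 = (z == x).
Proof. by rewrite /dist_is /= inE andbT. Qed.

Lemma dist_is1 : irreflexive e -> forall x z, dist_is e x z 1 = e x z.
Proof.
move=> irr x z; rewrite /dist_is in_ball1 /= in_set1.
by case: eqVneq => [->|_]; rewrite ?irr //= andbT.
Qed.

Lemma dist_is2 x w z : e x w -> e w z -> z != x -> ~~ e x z -> dist_is e x z 2.
Proof.
move=> xw wz zx xz; rewrite /dist_is.
have -> : ball e 2 x = ball e 1 x :|: [set z | [exists y in ball e 1 x, e y z]] by [].
rewrite in_setU !in_ball1 (negbTE zx) (negbTE xz) andbT inE.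
by apply/existsP; exists w; rewrite in_ball1 xw orbT.
Qed.

Lemma dist_is2_neq x z : dist_is e x z 2 -> (z != x) && ~~ e x z.
Proof. by case/andP=> _; rewrite in_ball1 negb_or. Qed.

End Distance.

Section DistanceRegular.
Variables (T : finType) (e : rel T) (D : nat) (b c : nat -> nat).
Hypothesis drg : distance_regular e D b c.
Hypothesis D_ge2 : 1 < D.

Lemma drg_sym : symmetric e. Proof. by case: drg => [[]]. Qed.
Lemma drg_irr : irreflexive e. Proof. by case: drg => [[]]. Qed.

Let intersection_numbers := proj2 (proj2 drg).

Lemma card_nbhd x : #|nbhd e x| = b 0.
Proof.
have xx : dist_is e x x 0 by rewrite dist_is0.
have [_ <-] := intersection_numbers (leq0n D) xx.
by apply: eq_card => z; rewrite !inE (dist_is1 drg_irr) andbb.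
Qed.

Lemma card_nbhdI_adj x y : e x y -> #|nbhd e x :&: nbhd e y| = a_num b c 1.
Proof.
move=> xy; have xy1 : dist_is e x y 1 by rewrite (dist_is1 drg_irr).
have [c1 b1] := intersection_numbers (ltnW D_ge2) xy1.
have x_only : [set z | e y z & dist_is e x z 1.-1] = [set x].
  apply/setP => z; rewrite !inE dist_is0.
  by case: eqVneq => [->|]; rewrite ?andbF ?andbT // drg_sym.
rewrite x_only cards1 in c1.
have split_nbhd : nbhd e y :\ x =
    (nbhd e x :&: nbhd e y) :|: [set z | e y z & dist_is e x z 2].
  apply/setP => z; rewrite !inE; case: (eqVneq z x) => [->|zx] /=.
    by rewrite drg_irr /=; apply/esym/negP => /andP[_ /dist_is2_neq]; rewrite eqxx.
  case yz: (e y z); rewrite ?andbF ?andbT //=.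
  by case xz: (e x z) => //=; rewrite (dist_is2 xy yz zx) ?xz.
have disj : (nbhd e x :&: nbhd e y) :&: [set z | e y z & dist_is e x z 2] = set0.
  apply/setP => z; rewrite !inE; apply/negP.
  by move=> /andP[/andP[xz _] /andP[_ /dist_is2_neq]]; rewrite xz andbF.
have := cardsD1 x (nbhd e y).
rewrite split_nbhd cardsU disj cards0 card_nbhd inE -drg_sym xy b1 /a_num -c1.
lia.
Qed.

Lemma card_nbhdI_dist2 u v : dist_is e u v 2 -> #|nbhd e u :&: nbhd e v| = c 2.
Proof.
move=> uv; have [<- _] := intersection_numbers D_ge2 uv.
by apply: eq_card => z; rewrite !inE (dist_is1 drg_irr) andbC.
Qed.

End DistanceRegular.

Lemma cocliqueP (T : finType) (e : rel T) (C : {set T}) :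
  reflect (coclique e C) [forall u in C, forall v in C, ~~ e u v].
Proof.
apply: (iffP forall_inP) => [co u v uC vC | co u uC].
  exact: (forall_inP (co u uC) v vC).
by apply/forall_inP => v; apply: co.
Qed.

Lemma coclique_prop_seq (T : finType) (e : rel T) s x u v n :
  coclique_prop e s -> e x u -> e x v -> u != v -> ~~ e u v -> 2 <= n <= s ->
  exists r, [/\ uniq [:: u, v & r], size r = n - 2,
    {subset [:: u, v & r] <= nbhd e x} & {in [:: u, v & r] &, forall i j, ~~ e i j}].
Proof.
move=> cp xu xv uv nuv /andP[n_ge2 n_le_s].
have [C [Cx Cco uC vC s_le_C]] := cp x u v xu xv uv nuv.
pose r := take (n - 2) (enum (C :\ v :\ u)).
have rC : {subset r <= C :\ v :\ u} by move=> w /mem_take; rewrite mem_enum.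
have lC : {subset [:: u, v & r] <= C}.
  by move=> i; rewrite !inE => /or3P[/eqP->|/eqP->|/rC]; rewrite // !inE => /and3P[].
exists r; split.
- rewrite /= take_uniq ?enum_uniq // andbT inE negb_or uv.
  by apply/andP; split; apply/negP => /rC; rewrite !inE eqxx ?andbF.
- rewrite size_takel // -cardE.
  have := cardsD1 v C; have := cardsD1 u (C :\ v).
  rewrite vC !inE uv uC /=; lia.
- by move=> i /lC; apply/subsetP.
- by move=> i j /lC iC /lC jC; apply: Cco.
Qed.

Section LocalGraph.
Variables (T : finType) (e : rel T) (D : nat) (b c : nat -> nat).
Hypothesis drg : distance_regular e D b c.
Hypothesis D_ge2 : 1 < D.

Local Notation a1 := (a_num b c 1).
Local Notation sym := (drg_sym drg).
Local Notation irr := (drg_irr drg).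

Definition local_cnbhd x i : {set T} := i |: (nbhd e i :&: nbhd e x).

Lemma card_local_cnbhd x i : e x i -> #|local_cnbhd x i| = a1.+1.
Proof.
move=> xi; have ix : e i x by rewrite sym.
by rewrite cardsU1 (card_nbhdI_adj drg D_ge2 ix) !inE irr.
Qed.

Lemma local_cnbhd_sub x i : e x i -> local_cnbhd x i \subset nbhd e x.
Proof. by move=> xi; apply/subsetP => z; rewrite !inE => /orP[/eqP->|/andP[]]. Qed.

Lemma sum_card_local_cnbhd x l : {subset l <= nbhd e x} ->
  \sum_(i <- l) #|local_cnbhd x i| = size l * a1.+1.
Proof.
move=> lx; rewrite -sum1_size big_distrl /=.
by apply: eq_big_seq => i /lx; rewrite inE mul1n => /card_local_cnbhd.
Qed.

Lemma local_cnbhdI_sub x i j : i != j -> ~~ e i j ->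
  local_cnbhd x i :&: local_cnbhd x j \subset nbhd e i :&: nbhd e j :&: nbhd e x.
Proof.
move=> ij nij; apply/subsetP => z; rewrite !inE.
case/andP=> [/orP[/eqP->|/andP[iz xz]] /orP[/eqP zj|/andP[jz _]]].
- by rewrite zj eqxx in ij.
- by rewrite sym jz in nij.
- by rewrite -zj iz in nij.
- by rewrite iz jz xz.
Qed.

Lemma card_local_cnbhdI x i j (W : {set T}) : e x i -> e x j -> i != j -> ~~ e i j ->
  W \subset (nbhd e i :&: nbhd e j) :\: nbhd e x ->
  #|local_cnbhd x i :&: local_cnbhd x j| + #|W| <= c 2.
Proof.
move=> xi xj ij nij W_out.
have ix : e i x by rewrite sym.
have ij2 : dist_is e i j 2 by apply: (dist_is2 ix xj); rewrite // eq_sym.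
rewrite -(card_nbhdI_dist2 drg D_ge2 ij2) -(cardsID (nbhd e x) (nbhd e i :&: _)).
by rewrite leq_add ?subset_leq_card ?local_cnbhdI_sub.
Qed.

Lemma card_local_cnbhdI_le x i j : e x i -> e x j -> i != j -> ~~ e i j ->
  #|local_cnbhd x i :&: local_cnbhd x j| <= c 2 - 1.
Proof.
move=> xi xj ij nij.
have := card_local_cnbhdI (W := [set x]) xi xj ij nij.
rewrite cards1 sub1set !inE -!(sym x) xi xj irr => /(_ isT); lia.
Qed.

Lemma card_local_cnbhdI_lt x i j w : e x i -> e x j -> i != j -> ~~ e i j ->
  e i w -> e j w -> w != x -> ~~ e x w ->
  #|local_cnbhd x i :&: local_cnbhd x j| < c 2 - 1.
Proof.
move=> xi xj ij nij iw jw wx nxw.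
have := card_local_cnbhdI (W := [set x; w]) xi xj ij nij.
rewrite cards2 eq_sym wx subUset !sub1set !inE -!(sym x) xi xj irr iw jw nxw.
by move=> /(_ isT); lia.
Qed.

Lemma local_bonferroni x l : {subset l <= nbhd e x} ->
  size l * a1.+1 <= b 0 + pair_overlap (local_cnbhd x) l.
Proof.
move=> lx; rewrite -(sum_card_local_cnbhd lx) -(card_nbhd drg x).
apply: leq_trans (bonferroni_pairs _ _) _; rewrite leq_add2r subset_leq_card //.
by rewrite bigcup_seq; apply/bigcupsP => i /lx; rewrite inE => /local_cnbhd_sub.
Qed.

Lemma local_coclique_bound x l : uniq l -> {subset l <= nbhd e x} ->
  {in l &, forall i j, ~~ e i j} ->
  size l * a1.+1 <= b 0 + 'C(size l, 2) * (c 2 - 1).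
Proof.
move=> ul lx lco; apply: leq_trans (local_bonferroni lx) _.
rewrite leq_add2l pair_overlap_le // => i j il jl ij.
by apply: card_local_cnbhdI_le; rewrite ?lco //; [move/lx: il | move/lx: jl]; rewrite inE.
Qed.

Lemma local_coclique_bound_lt x u v r w : uniq [:: u, v & r] ->
  {subset [:: u, v & r] <= nbhd e x} -> {in [:: u, v & r] &, forall i j, ~~ e i j} ->
  e u w -> e v w -> w != x -> ~~ e x w ->
  (size r).+2 * a1.+1 < b 0 + 'C((size r).+2, 2) * (c 2 - 1).
Proof.
move=> ul lx lco uw vw wx nxw.
have l_adj i : i \in [:: u, v & r] -> e x i by move/lx; rewrite inE.
apply: leq_ltn_trans (local_bonferroni lx) _; rewrite ltn_add2l.
apply: pair_overlap_lt => // [i j il jl ij|].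
  exact: card_local_cnbhdI_le (l_adj i il) (l_adj j jl) ij (lco i j il jl).
have uv : u != v by case/andP: ul; rewrite inE negb_or => /andP[].
apply: card_local_cnbhdI_lt uw vw wx nxw; rewrite ?l_adj ?lco ?inE ?eqxx ?orbT //.
Qed.

Lemma coclique_setU1 (C : {set T}) w : coclique e C -> {in C, forall i, ~~ e i w} ->
  coclique e (w |: C).
Proof.
move=> Cco Cw u v; rewrite !in_setU1 => /predU1P[->|uC] /predU1P[->|vC].
- by rewrite irr.
- by rewrite sym Cw.
- exact: Cw.
- exact: Cco.
Qed.

Lemma maximal_coclique_cover x (C : {set T}) : coclique e C ->
  (forall w, w \in nbhd e x -> coclique e (w |: C) -> w \in C) ->
  nbhd e x \subset \bigcup_(i in C) local_cnbhd x i.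
Proof.
move=> Cco Cmax; apply/subsetP => w wx; apply/bigcupP.
have [/exists_inP[i iC iw] | /exists_inP noadj] := boolP [exists i in C, e i w].
  by exists i; rewrite // !inE iw; rewrite inE in wx; rewrite wx orbT.
exists w; last by rewrite !inE eqxx.
apply: Cmax wx (coclique_setU1 Cco _) => i iC.
by apply/negP => iw; apply: noadj; exists i.
Qed.

Lemma exists_maximal_local_coclique x y z : e x y -> e x z -> ~~ e y z ->
  exists2 C : {set T}, [/\ C \subset nbhd e x, coclique e C, y \in C & z \in C] &
    forall w, w \in nbhd e x -> coclique e (w |: C) -> w \in C.
Proof.
move=> xy xz nyz.
pose P (C : {set T}) := [&& C \subset nbhd e x, [forall u in C, forall v in C, ~~ e u v],
                y \in C & z \in C].
have Pyz : P [set y; z].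
  rewrite /P !inE !eqxx orbT !andbT subUset !sub1set !inE xy xz /=.
  apply/cocliqueP => u v; rewrite !inE => /orP[]/eqP-> /orP[]/eqP->; rewrite ?irr //.
  by rewrite sym.
case: (arg_maxnP (fun C : {set T} => #|C|) Pyz) => C /and4P[Cx /cocliqueP Cco yC zC] Cmax.
exists C => // w wx wCco; apply/negPn/negP => wC.
suff: P (w |: C) by move/Cmax; rewrite cardsU1 wC; lia.
rewrite /P subUset sub1set wx Cx !in_setU1 yC zC !orbT /= andbT.
exact/cocliqueP.
Qed.

Lemma local_coclique_cover x y z : e x y -> e x z -> ~~ e y z ->
  exists C : {set T},
    [/\ C \subset nbhd e x, coclique e C, y \in C, z \in C & b 0 <= #|C| * a1.+1].
Proof.
move=> xy xz nyz.
have [C [Cx Cco yC zC] Cmax] := exists_maximal_local_coclique xy xz nyz.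
exists C; split => //.
rewrite -(card_nbhd drg x) -sum_nat_const.
apply: leq_trans (subset_leq_card (maximal_coclique_cover Cco Cmax)) _.
rewrite -big_enum (leq_trans (card_bigcup_seq_le _ _)) // big_enum /=.
by apply/eq_leq/eq_bigr => i /(subsetP Cx); rewrite inE => /card_local_cnbhd.
Qed.

End LocalGraph.

Section Proposition3.
Variables (T : finType) (e : rel T) (D : nat) (b c : nat -> nat) (s : nat).
Hypothesis drg : distance_regular e D b c.
Hypothesis D_ge2 : 1 < D.
Hypothesis cp : coclique_prop e s.
Hypothesis s_max : forall s', coclique_prop e s' -> s' <= s.

Local Notation a1 := (a_num b c 1).

(* If every local graph were complete, coclique_prop would hold vacuously for s + 1. *)
Lemma exists_local_nonedge : exists x y z, [/\ e x y, e x z, y != z & ~~ e y z].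
Proof.
have [/existsP[x /existsP[y /existsP[z /and4P[]]]] | none] :=
  boolP [exists x, exists y, exists z, [&& e x y, e x z, y != z & ~~ e y z]].
  by exists x, y, z.
exfalso; suff: s < s by rewrite ltnn.
apply: s_max => x y z xy xz yz nyz; case/negP: none.
by apply/existsP; exists x; apply/existsP; exists y; apply/existsP; exists z; apply/and4P.
Qed.

Lemma c2_gt0 : 0 < c 2.
Proof.
have [x [y [z [xy xz yz nyz]]]] := exists_local_nonedge.
have yx : e y x by rewrite (drg_sym drg).
have zy : z != y by rewrite eq_sym.
rewrite -(card_nbhdI_dist2 drg D_ge2 (dist_is2 yx xz zy nyz)) card_gt0.
by apply/set0Pn; exists x; rewrite !inE yx -(drg_sym drg) xz.
Qed.

Lemma valency_le_coclique_bound : b 0 <= s * a1.+1.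
Proof.
rewrite leqNgt; apply/negP => lt_k; suff: s < s by rewrite ltnn.
apply: s_max => x y z xy xz _ nyz.
have [C [Cx Cco yC zC k_le]] := local_coclique_cover drg D_ge2 xy xz nyz.
exists C; split => //.
by rewrite -(ltn_pmul2r (ltn0Sn a1)); apply: leq_trans lt_k k_le.
Qed.

Lemma coclique_bound s' : 2 <= s' <= s -> s' * a1.+1 <= b 0 + 'C(s', 2) * (c 2 - 1).
Proof.
move=> hs'; have [x [y [z [xy xz yz nyz]]]] := exists_local_nonedge.
have [r [ur sr rx rco]] := coclique_prop_seq cp xy xz yz nyz hs'.
have -> : s' = size [:: y, z & r] by rewrite /= sr; lia.
exact: local_coclique_bound drg D_ge2 _ _ ur rx rco.
Qed.

Lemma mu_graph_clique s' : 2 <= s' <= s ->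
  s' * a1.+1 = b 0 + 'C(s', 2) * (c 2 - 1) ->
  forall u v, dist_is e u v 2 -> clique e (nbhd e u :&: nbhd e v).
Proof.
move=> hs' eq_s' u v uv w w'; rewrite !inE => /andP[uw vw] /andP[uw' vw'] ww'.
apply/negPn/negP => nww'; have /andP[vu nuv] := dist_is2_neq uv.
have wu : e w u by rewrite (drg_sym drg).
have wv : e w v by rewrite (drg_sym drg).
have uv' : u != v by rewrite eq_sym.
have [r [ur sr rw rco]] := coclique_prop_seq cp wu wv uv' nuv hs'.
have := local_coclique_bound_lt drg D_ge2 ur rw rco uw' vw' _ nww'.
have -> : (size r).+2 = s' by rewrite sr; lia.
by rewrite eq_sym ww' eq_s' ltnn => /(_ isT).
Qed.

Lemma terwilliger_of_coclique_bound_eq s' : 2 <= s' <= s ->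
  s' * a1.+1 = b 0 + 'C(s', 2) * (c 2 - 1) -> terwilliger e.
Proof.
move=> hs' eq_s'; split; first by case: drg => _ [[]].
have [x [y [z [xy xz yz nyz]]]] := exists_local_nonedge.
split; first by move=> complete; rewrite complete in nyz.
exists (c 2); split; first exact: c2_gt0.
move=> u v uv; split; first exact: mu_graph_clique eq_s' u v uv.
exact: card_nbhdI_dist2 drg D_ge2 u v uv.
Qed.

End Proposition3.

Local Open Scope ring_scope.

Theorem proposition3 (T : finType) (e : rel T) (D : nat) (b c : nat -> nat)
  (s : nat) :
  distance_regular e D b c -> (2 <= D)%N ->
  coclique_prop e s -> (forall s', coclique_prop e s' -> (s' <= s)%N) ->
  ((b 0%N)%:R / ((a_num b c 1 + 1)%N)%:R <= (s%:R : rat)) /\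
  ((forall s' : nat, (2 <= s' <= s)%N ->
      ((s' * ((a_num b c 1 + 1)%N))%:R - (b 0%N)%:R) / ('C(s', 2))%:R
        <= (c 2%N)%:R - 1 :> rat) /\
   ((exists s' : nat, (2 <= s' <= s)%N /\
      ((s' * ((a_num b c 1 + 1)%N))%:R - (b 0%N)%:R) / ('C(s', 2))%:R
        = (c 2%N)%:R - 1 :> rat) ->
    terwilliger e)).
Proof.
move=> drg D_ge2 cp s_max.
have c2_sub1 : (c 2)%:R - 1 = (c 2 - 1)%N%:R :> rat.
  by rewrite natrB // (c2_gt0 drg D_ge2 s_max).
have binom_gt0 s' : (2 <= s')%N -> (0 < 'C(s', 2))%N by rewrite bin_gt0.
rewrite c2_sub1 addn1; split; [|split].
- rewrite ler_pdivrMr ?ltr0n // -natrM ler_nat.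
  exact: valency_le_coclique_bound drg D_ge2 s_max.
- move=> s' hs'; rewrite ler_pdivrMr ?ltr0n ?binom_gt0 ?(andP hs').1 //.
  rewrite -natrM lerBlDr -natrD ler_nat addnC [(_ * 'C(s', 2))%N]mulnC.
  exact: (coclique_bound drg D_ge2 cp s_max hs').
- case=> s' [hs' eq_s']; apply: (terwilliger_of_coclique_bound_eq drg D_ge2 cp s_max hs').
  have C_neq0 : 'C(s', 2)%:R != 0 :> rat by rewrite pnatr_eq0 -lt0n binom_gt0 ?(andP hs').1.
  move: eq_s' => /(congr1 (fun t => t * 'C(s', 2)%:R)); rewrite divfK //.
  rewrite -natrM => /eqP; rewrite subr_eq -natrD eqr_nat => /eqP ->.
  by rewrite addnC mulnC.
Qed.
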